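(* For all sufficiently large $R$ the following holds. Let $V\subset\mathcal D_R$ be a finite set of points and $G_V$ the graph on $V$ in which distinct points are adjacent iff their hyperbolic distance is at most $R$. Let $(i,j)$ be admissible, let $S$ be the set of points of $V$ lying in tiles below $T_{i,j}$ other than $T_{i,j}$ itself, and let $y=|V\cap T_{i,j}|$. Suppose $y\ge 3$ and $G_V[S]$ can be covered by $x$ vertex-disjoint cycles and isolated vertices. Then $G_V[S\cup(V\cap T_{i,j})]$ can be covered by $\max\{1,x-y+1\}$ vertex-disjoint cycles and isolated vertices. Furthermore, if $y>x$, then $G_V[S\cup(V\cap T_{i,j})]$ has a Hamilton cycle (i.e. can be covered by a single cycle) exactly $y-x$ of whose edges have both endpoints in $T_{i,j}$.
   Context: $\mathcal D_R$ is the hyperbolic disk (curvature $-1$) of radius $R$ around the origin, with polar coordinates $(r,\theta)$, $r\in[0,R)$, $\theta\in(0,2\pi]$. Tiling: $i_{\max}=\lceil 0.9R/(2\ln 2)\rceil$, $n_i=2^{4-i+\lfloor R/(2\ln 2)\rfloor}$ for integers $0\le i\le i_{\max}$; $(i,j)$ is admissible if $0\le i\le i_{\max}$, $0\le j<n_i$; $T_{i,j}=\{(r,\theta)\in\mathcal D_R:\ R-2(i+1)\ln 2\le r<R-2i\ln 2,\ 2\pi j/n_i<\theta\le 2\pi(j+1)/n_i\}$. A tile $T_{i',j'}$ is below $T_{i,j}$ if $i'\le i$ and $T_{i',j'}$ is contained in the sector $\{(r,\theta): 2\pi j/n_i<\theta\le 2\pi(j+1)/n_i\}$. A graph $H$ is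 covered by $k$ vertex-disjoint cycles and isolated vertices if its vertex set can be partitioned into $k$ parts, each of which is either a single vertex or the vertex set of a cycle (of length at least $3$) in $H$. *)

From Stdlib Require Import Reals ZArith List.
Import ListNotations.
Open Scope R_scope.

(* A point of the hyperbolic plane in polar coordinates (r, theta). *)
Definition pt : Type := (R * R)%type.

Definition leb (a b : R) : bool := if Rle_dec a b then true else false.
Definition ltb (a b : R) : bool := if Rlt_dec a b then true else false.

Definition floorZ (x : R) : Z := Int_part x.
Definition ceilZ (x : R) : Z := (- Int_part (- x))%Z.

Definition inDisk (Rad : R) (p : pt) : Prop :=
  0 <= fst p < Rad /\ 0 < snd p <= 2 * PI.

Definition arcosh (c : R) : R := ln (c + sqrt (c * c - 1)).
Definition hdist (p q : pt) : R :=
  arcosh (cosh (fst p) * cosh (fst q)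
          - sinh (fst p) * sinh (fst q) * cos (snd p - snd q)).

Definition adjG (Rad : R) (p q : pt) : Prop := p <> q /\ hdist p q <= Rad.

Definition imax (Rad : R) : Z := ceilZ (9 / 10 * Rad / (2 * ln 2)).
Definition ntiles (Rad : R) (i : nat) : R :=
  powerRZ 2 (4 - Z.of_nat i + floorZ (Rad / (2 * ln 2)))%Z.

Definition admissible (Rad : R) (i j : nat) : Prop :=
  (Z.of_nat i <= imax Rad)%Z /\ INR j < ntiles Rad i.

Definition inTileb (Rad : R) (i j : nat) (p : pt) : bool :=
  ((leb 0 (fst p) && ltb (fst p) Rad) && (ltb 0 (snd p) && leb (snd p) (2 * PI)))
  && (leb (Rad - 2 * (INR i + 1) * ln 2) (fst p) && ltb (fst p) (Rad - 2 * INR i * ln 2))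
  && (ltb (2 * PI * INR j / ntiles Rad i) (snd p)
      && leb (snd p) (2 * PI * (INR j + 1) / ntiles Rad i)).

Definition inSector (Rad : R) (i j : nat) (p : pt) : Prop :=
  2 * PI * INR j / ntiles Rad i < snd p <= 2 * PI * (INR j + 1) / ntiles Rad i.

Definition below (Rad : R) (i' j' i j : nat) : Prop :=
  (i' <= i)%nat /\ forall p, inTileb Rad i' j' p = true -> inSector Rad i j p.

Definition cyc_edges {T : Type} (c : list T) : list (T * T) :=
  match c with
  | [] => []
  | x :: rest => combine c (rest ++ [x])
  end.

Definition is_cycle {T : Type} (adj : T -> T -> Prop) (c : list T) : Prop :=
  (3 <= length c)%nat /\ NoDup c /\ Forall (fun e => adj (fst e) (snd e)) (cyc_edges c).

Definition covered_by {T : Type} (adj : T -> T -> Prop) (W : T -> Prop) (k : nat) : Prop :=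
  exists parts : list (list T),
    length parts = k /\
    NoDup (concat parts) /\
    (forall v, In v (concat parts) <-> W v) /\
    Forall (fun c => length c = 1%nat \/ is_cycle adj c) parts.

From Pilot Require Import Defs.
From Stdlib Require Import Reals List Lia Lra Permutation.
Import ListNotations.

(* Call the vertices marked by a predicate [f] the hub, and
   suppose every hub vertex is adjacent to every other vertex of the target set [W].  Given a
   cover of the unmarked part [S] by [x] cycles and isolated vertices, each part is traversed
   by a Hamilton path; keep [x - y] parts and splice the other [min x y] paths between
   consecutive hub vertices [t1 P1 t2 P2 ... tk Pk t(k+1) ... ty] ([interleave]).  This closed
   walk is a cycle covering the spliced parts and the hub, and the edges joining two hub
   vertices are exactly the [y - min x y] consecutive hub pairs ([absorb_hub]).

   For [Rad >= 1000], every point of [T_{i,j}] is within distance [Rad] of every point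
   of the tiles below [T_{i,j}] ([tile_hub]): radii differ by at most [Rad - 2 ln 2] and the
   angular width of a tile of ring [i] is about [2^i e^(-Rad/2)], which the hyperbolic law of
   cosines turns into a distance bound ([hdist_le]).  Tiles below [T_{i,j}] other than itself are
   disjoint from it ([tile_disj]). *)

Fixpoint path_edges {T : Type} (p : T) (l : list T) : list (T * T) :=
  match l with
  | [] => []
  | a :: l' => (p, a) :: path_edges a l'
  end.

Definition is_path {T : Type} (adj : T -> T -> Prop) (P : list T) : Prop :=
  match P with
  | [] => False
  | a :: l => Forall (fun e => adj (fst e) (snd e)) (path_edges a l)
  end.

Definition inner_edges {T : Type} (f : T -> bool) (es : list (T * T)) : nat :=
  length (filter (fun e => andb (f (fst e)) (f (snd e))) es).

(* Splicing: [interleave [P1; ...; Pk] [t1; ...; tm]] is [t1 :: P1 ++ t2 :: P2 ++ ... ++ tk :: Pk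
   ++ t(k+1) :: ... :: tm], a closed walk when the [ti] are adjacent to everything. *)
Fixpoint interleave {T : Type} (Q : list (list T)) (hub : list T) : list T :=
  match Q, hub with
  | [], _ => hub
  | P :: Q', t :: hub' => t :: P ++ interleave Q' hub'
  | _ :: _, [] => concat Q
  end.

Lemma last_cons {T : Type} (a d : T) (l : list T) : last (a :: l) d = last l a.
Proof.
  revert a d; induction l as [|b l IH]; intros a d; [reflexivity|].
  change (last (a :: b :: l) d) with (last (b :: l) d). rewrite !IH. reflexivity.
Qed.

Lemma last_In {T : Type} (a : T) (l : list T) : In (last l a) (a :: l).
Proof.
  revert a; induction l as [|b l IH]; intros a; [simpl; auto|].
  rewrite last_cons. right. apply IH.
Qed.

Lemma path_edges_app {T : Type} (p : T) (l1 l2 : list T) :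
  path_edges p (l1 ++ l2) = path_edges p l1 ++ path_edges (last l1 p) l2.
Proof.
  revert p; induction l1 as [|a l1 IH]; intros p; [reflexivity|].
  rewrite last_cons. simpl. rewrite IH. reflexivity.
Qed.

Lemma cyc_edges_cons {T : Type} (a : T) (l : list T) :
  cyc_edges (a :: l) = path_edges a (l ++ [a]).
Proof.
  unfold cyc_edges. generalize a at 1 3 as b.
  revert a; induction l as [|c l IH]; intros a b; [reflexivity|].
  simpl. f_equal. apply IH.
Qed.

Lemma path_edges_distinct {T : Type} (p : T) (l : list T) :
  NoDup (p :: l) -> Forall (fun e => fst e <> snd e) (path_edges p l).
Proof.
  revert p; induction l as [|a l IH]; intros p Hnd; simpl; [constructor|].
  inversion Hnd as [|? ? Hp Hnd']; subst.
  constructor; [simpl; intros ->; apply Hp; left; reflexivity|apply IH; exact Hnd'].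
Qed.

Lemma cycle_edges_distinct {T : Type} (a : T) (l : list T) :
  NoDup (a :: l) -> l <> [] -> Forall (fun e => fst e <> snd e) (cyc_edges (a :: l)).
Proof.
  intros Hnd Hl. rewrite cyc_edges_cons, path_edges_app.
  apply Forall_app; split; [apply path_edges_distinct, Hnd|].
  destruct l as [|b l]; [congruence|].
  rewrite last_cons. simpl. constructor; [|constructor].
  simpl. intros Heq. inversion Hnd as [|? ? Ha _]. apply Ha. rewrite <- Heq.
  apply last_In.
Qed.

(* Dropping the closing edge of a cycle leaves a Hamilton path of its vertex set. *)
Lemma cycle_is_path {T : Type} (adj : T -> T -> Prop) (c : list T) :
  is_cycle adj c -> is_path adj c.
Proof.
  intros (Hlen & _ & Hedges). destruct c as [|a l]; [simpl in Hlen; lia|].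
  rewrite cyc_edges_cons, path_edges_app in Hedges. simpl.
  apply Forall_app in Hedges. apply Hedges.
Qed.

Lemma cover_part_is_path {T : Type} (adj : T -> T -> Prop) (c : list T) :
  length c = 1%nat \/ is_cycle adj c -> is_path adj c.
Proof.
  intros [H1|Hc]; [|apply cycle_is_path, Hc].
  destruct c as [|a [|b l]]; simpl in H1; try lia. constructor.
Qed.

Lemma interleave_perm {T : Type} (Q : list (list T)) (hub : list T) :
  Permutation (interleave Q hub) (concat Q ++ hub).
Proof.
  revert hub; induction Q as [|P Q IH]; intros hub; [apply Permutation_refl|].
  destruct hub as [|t hub]; simpl.
  - rewrite app_nil_r. apply Permutation_refl.
  - eapply perm_trans; [apply perm_skip, Permutation_app_head, IH|].
    rewrite app_assoc. apply Permutation_middle.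
Qed.

Lemma interleave_head {T : Type} (Q : list (list T)) (t : T) (hub : list T) :
  exists rest, interleave Q (t :: hub) = t :: rest.
Proof. destruct Q; simpl; eauto. Qed.

Lemma inner_edges_cons {T : Type} (f : T -> bool) (a b : T) (es : list (T * T)) :
  inner_edges f ((a, b) :: es) = ((if andb (f a) (f b) then 1 else 0) + inner_edges f es)%nat.
Proof. unfold inner_edges. simpl. destruct (andb _ _); reflexivity. Qed.

Lemma inner_edges_app {T : Type} (f : T -> bool) (es1 es2 : list (T * T)) :
  inner_edges f (es1 ++ es2) = (inner_edges f es1 + inner_edges f es2)%nat.
Proof. unfold inner_edges. rewrite filter_app, length_app. reflexivity. Qed.

Lemma inner_edges_outside {T : Type} (f : T -> bool) (p : T) (l : list T) :
  (forall v, In v l -> f v = false) -> inner_edges f (path_edges p l) = 0%nat.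
Proof.
  revert p; induction l as [|a l IH]; intros p Hl; [reflexivity|].
  cbn [path_edges]. rewrite inner_edges_cons, (Hl a (or_introl eq_refl)), Bool.andb_false_r.
  apply IH. intros; apply Hl; right; auto.
Qed.

Section Splice.

Variables (T : Type) (adj : T -> T -> Prop) (f : T -> bool) (W : T -> Prop).

Hypothesis hub_adj : forall t v, f t = true -> W v -> t <> v -> adj t v /\ adj v t.

(* [adj] up to loops; the loop-freeness of a cycle is obtained separately from [NoDup]. *)
Let weak_adj (a b : T) : Prop := a <> b -> adj a b.

Lemma weak_adj_from_hub (t v : T) : f t = true -> W v -> weak_adj t v.
Proof. intros Ht Hv Hne. apply (hub_adj t v Ht Hv Hne). Qed.

Lemma weak_adj_to_hub (t v : T) : f t = true -> W v -> weak_adj v t.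
Proof. intros Ht Hv Hne. apply (hub_adj t v Ht Hv); congruence. Qed.

Lemma interleave_walk (Q : list (list T)) (hub : list T) (p z : T) :
  (length Q <= length hub)%nat ->
  (forall t, In t hub -> f t = true /\ W t) -> f z = true ->
  (forall P, In P Q -> is_path adj P /\ forall v, In v P -> W v) -> W p ->
  Forall (fun e => weak_adj (fst e) (snd e)) (path_edges p (interleave Q hub ++ [z])).
Proof.
  revert hub p. induction Q as [|P Q IH]; intros hub p HL Hhub Hz HQ Hp; simpl.
  - clear HL. revert p Hp; induction hub as [|t hub IHh]; intros p Hp; simpl.
    + constructor; [apply weak_adj_to_hub; auto|constructor].
    + destruct (Hhub t (or_introl eq_refl)) as [Ht HWt].
      constructor; [apply weak_adj_to_hub; auto|].
      apply IHh; [intros; apply Hhub; right; auto|exact HWt].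
  - destruct hub as [|t hub]; [simpl in HL; lia|].
    destruct (Hhub t (or_introl eq_refl)) as [Ht HWt].
    destruct (HQ P (or_introl eq_refl)) as [HP HPW].
    destruct P as [|a l]; [contradiction|].
    cbn [interleave app path_edges]. rewrite <- app_assoc, path_edges_app.
    constructor; [apply weak_adj_to_hub; auto|].
    constructor; [apply weak_adj_from_hub; auto; apply HPW; left; auto|].
    apply Forall_app; split.
    + eapply Forall_impl; [|exact HP]. intros e He _. exact He.
    + apply IH; [simpl in HL; lia|intros; apply Hhub; right; auto|exact Hz|
                 intros; apply HQ; right; auto|apply HPW, last_In].
Qed.

Lemma interleave_inner_edges (Q : list (list T)) (hub : list T) (p z : T) :
  (length Q <= length hub)%nat ->
  (forall t, In t hub -> f t = true) -> f z = true ->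
  (forall P, In P Q -> P <> [] /\ forall v, In v P -> f v = false) ->
  inner_edges f (path_edges p (interleave Q hub ++ [z]))
  = ((if f p then 1 else 0) + (length hub - length Q))%nat.
Proof.
  revert hub p. induction Q as [|P Q IH]; intros hub p HL Hhub Hz HQ; simpl.
  - clear HL. revert p; induction hub as [|t hub IHh]; intros p.
    + unfold inner_edges. simpl. rewrite Hz. destruct (f p); reflexivity.
    + cbn [app path_edges]. rewrite inner_edges_cons, IHh by (intros; apply Hhub; right; auto).
      rewrite (Hhub t (or_introl eq_refl)). simpl. destruct (f p); simpl; lia.
  - destruct hub as [|t hub]; [simpl in HL; lia|].
    destruct (HQ P (or_introl eq_refl)) as [HPne HPf].
    destruct P as [|a l]; [congruence|].
    cbn [interleave app path_edges]. rewrite <- app_assoc, path_edges_app.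
    rewrite !inner_edges_cons, inner_edges_app.
    rewrite (Hhub t (or_introl eq_refl)), (HPf a (or_introl eq_refl)).
    rewrite inner_edges_outside by (intros; apply HPf; right; auto).
    rewrite IH; [|simpl in HL; lia|intros; apply Hhub; right; auto|exact Hz|
                 intros; apply HQ; right; auto].
    rewrite (HPf (last l a)) by apply last_In. simpl. destruct (f p); simpl; lia.
Qed.

Lemma spliced_cycle (Q : list (list T)) (hub : list T) :
  NoDup (concat Q ++ hub) -> (3 <= length hub)%nat -> (length Q <= length hub)%nat ->
  (forall t, In t hub -> f t = true /\ W t) ->
  (forall P, In P Q -> is_path adj P /\ forall v, In v P -> W v /\ f v = false) ->
  is_cycle adj (interleave Q hub) /\
  inner_edges f (cyc_edges (interleave Q hub)) = (length hub - length Q)%nat.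
Proof.
  intros Hnd Hy HL Hhub HQ.
  destruct hub as [|t hub']; [simpl in Hy; lia|].
  destruct (interleave_head Q t hub') as [rest Hrest].
  pose proof (interleave_perm Q (t :: hub')) as Hperm.
  assert (HCnd : NoDup (t :: rest)).
  { rewrite <- Hrest. exact (Permutation_NoDup (Permutation_sym Hperm) Hnd). }
  assert (HClen : (3 <= length (t :: rest))%nat).
  { rewrite <- Hrest, (Permutation_length Hperm), length_app. lia. }
  assert (Ht : f t = true /\ W t) by (apply Hhub; left; reflexivity).
  rewrite Hrest, cyc_edges_cons.
  split; [split; [exact HClen|split; [exact HCnd|]]|].
  - (* every step of the closed walk is a non-loop, hence an edge *)
    assert (Hwalk := interleave_walk Q (t :: hub') t t HL Hhub (proj1 Ht)
                       (fun P HP => conj (proj1 (HQ P HP)) (fun v Hv => proj1 (proj2 (HQ P HP) v Hv)))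
                       (proj2 Ht)).
    rewrite Hrest in Hwalk. apply Forall_inv_tail in Hwalk.
    assert (Hdist : Forall (fun e => fst e <> snd e) (cyc_edges (t :: rest))).
    { apply cycle_edges_distinct; [exact HCnd|]. intros ->. simpl in HClen. lia. }
    rewrite cyc_edges_cons in Hdist.
    rewrite Forall_forall in Hwalk, Hdist |- *. intros e He.
    rewrite cyc_edges_cons in He. apply Hwalk; [exact He|apply Hdist, He].
  - assert (Hcount := interleave_inner_edges Q (t :: hub') t t HL
                        (fun v Hv => proj1 (Hhub v Hv)) (proj1 Ht)).
    rewrite Hrest in Hcount. cbn [app path_edges] in Hcount.
    rewrite inner_edges_cons, (proj1 Ht) in Hcount. simpl in Hcount.
    assert (Hnonhub : forall P, In P Q -> P <> [] /\ forall v, In v P -> f v = false).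
    { intros P HP. destruct (HQ P HP) as [HPp HPv].
      split; [intros ->; contradiction|intros v Hv; apply HPv, Hv]. }
    specialize (Hcount Hnonhub). simpl. lia.
Qed.

(* Absorbing a set [hub] of at least 3 marked universal vertices into a cover of the unmarked
   vertex set [S] by [x] parts: [x - |hub|] parts are kept and the remaining ones are spliced
   with the hub into one cycle. *)
Lemma absorb_hub (S : T -> Prop) (hub : list T) (x : nat) :
  NoDup hub -> (3 <= length hub)%nat ->
  (forall t, In t hub -> f t = true) -> (forall v, S v -> f v = false) ->
  (forall v, W v <-> S v \/ In v hub) ->
  covered_by adj S x ->
  covered_by adj W (Nat.max 1 (x + 1 - length hub)) /\
  ((length hub > x)%nat -> exists c, is_cycle adj c /\ (forall v, In v c <-> W v) /\
                                     inner_edges f (cyc_edges c) = (length hub - x)%nat).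
Proof.
  intros Hhubnd Hy Hhubf HSf HW (parts & Hlen & Hnd & Hmem & Hparts).
  set (Q1 := firstn (x - length hub) parts). set (Q2 := skipn (x - length hub) parts).
  set (C := interleave Q2 hub).
  assert (Hsplit : parts = Q1 ++ Q2) by (symmetry; apply firstn_skipn).
  assert (Hall : NoDup (concat parts ++ hub)).
  { apply NoDup_app; [exact Hnd|exact Hhubnd|]. intros v Hv Hv'.
    apply Hmem, HSf in Hv. rewrite (Hhubf v Hv') in Hv. discriminate. }
  assert (Hperm : Permutation (concat (Q1 ++ [C])) (concat parts ++ hub)).
  { rewrite Hsplit, !concat_app. simpl. rewrite app_nil_r, <- app_assoc.
    apply Permutation_app_head, interleave_perm. }
  assert (HQ2nd : NoDup (concat Q2 ++ hub)).
  { rewrite Hsplit, concat_app, <- app_assoc in Hall. exact (NoDup_app_remove_l _ _ Hall). }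
  assert (HQ2len : length Q2 = (x - (x - length hub))%nat)
    by (unfold Q2; rewrite length_skipn, Hlen; reflexivity).
  assert (HQ2 : forall P, In P Q2 -> is_path adj P /\ forall v, In v P -> W v /\ f v = false).
  { intros P HP.
    assert (HPparts : In P parts) by (rewrite Hsplit; apply in_or_app; right; exact HP).
    split; [apply cover_part_is_path; rewrite Forall_forall in Hparts; auto|].
    intros v Hv. assert (HSv : S v) by (apply Hmem, in_concat; eauto).
    split; [apply HW; left; exact HSv|apply HSf, HSv]. }
  destruct (spliced_cycle Q2 hub HQ2nd Hy ltac:(lia)
              (fun t Ht => conj (Hhubf t Ht) (proj2 (HW t) (or_intror Ht))) HQ2) as [HC HCcount].
  assert (Hcovers : forall v, In v (concat (Q1 ++ [C])) <-> W v).
  { intros v. rewrite HW. split; intro Hv.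
    - apply (Permutation_in _ Hperm), in_app_or in Hv.
      destruct Hv as [Hv|Hv]; [left; apply Hmem, Hv|right; exact Hv].
    - apply (Permutation_in _ (Permutation_sym Hperm)), in_or_app.
      destruct Hv as [Hv|Hv]; [left; apply Hmem, Hv|right; exact Hv]. }
  split.
  - exists (Q1 ++ [C]). split; [|split; [|split]].
    + rewrite length_app. unfold Q1. rewrite length_firstn, Hlen. change (length [C]) with 1%nat. lia.
    + exact (Permutation_NoDup (Permutation_sym Hperm) Hall).
    + exact Hcovers.
    + apply Forall_app. split; [|constructor; [right; exact HC|constructor]].
      rewrite Hsplit in Hparts. apply Forall_app in Hparts. apply Hparts.
  - intros Hyx. exists C.
    assert (HQ1 : Q1 = []) by (unfold Q1; replace (x - length hub)%nat with 0%nat by lia; reflexivity).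
    split; [exact HC|split].
    + intros v. rewrite <- Hcovers, HQ1. simpl. rewrite app_nil_r. reflexivity.
    + unfold C. rewrite HCcount, HQ2len. lia.
Qed.

End Splice.

Open Scope R_scope.

Lemma sin_sq_le (t : R) : sin t * sin t <= t * t.
Proof.
  assert (Hpos : forall u, 0 < u -> sin u * sin u <= u * u).
  { intros u Hu. pose proof (SIN_bound u). pose proof PI2_1.
    destruct (Rlt_le_dec u 1).
    - pose proof (sin_ge_0 u ltac:(lra) ltac:(lra)). pose proof (sin_lt_x u Hu). nra.
    - nra. }
  destruct (Rtotal_order t 0) as [Ht|[->|Ht]].
  - pose proof (Hpos (- t) ltac:(lra)) as H. rewrite sin_neg in H. nra.
  - rewrite sin_0. lra.
  - auto.
Qed.

Lemma ln2_bounds : 0 < ln 2 < 1.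
Proof.
  pose proof ln_lt_2. split; [lra|].
  rewrite <- (ln_exp 1). apply ln_increasing; [lra|].
  pose proof (exp_ineq1 1 ltac:(lra)). lra.
Qed.

Lemma exp_le_mono (a b : R) : a <= b -> exp a <= exp b.
Proof.
  intros [Hlt|Heq]; [apply Rlt_le, exp_increasing; exact Hlt|rewrite Heq; apply Rle_refl].
Qed.

Lemma exp_minus_2ln2 (a : R) : exp (a - 2 * ln 2) = exp a / 4.
Proof.
  replace (exp a) with (exp (a - 2 * ln 2 + ln 2 + ln 2)) by (f_equal; ring).
  rewrite !exp_plus, exp_ln by lra. field.
Qed.

Lemma arcosh_le (K Rad : R) : 1 <= K -> 2 * K <= exp Rad -> arcosh K <= Rad.
Proof.
  intros HK1 HK2. unfold arcosh.
  assert (Hsq : sqrt (K * K - 1) <= K).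
  { apply Rle_trans with (sqrt (K * K)); [apply sqrt_le_1_alt; lra|].
    rewrite sqrt_square by lra. lra. }
  pose proof (sqrt_pos (K * K - 1)).
  rewrite <- (ln_exp Rad).
  destruct (Rle_lt_or_eq_dec (K + sqrt (K * K - 1)) (exp Rad)) as [Hlt|Heq]; [lra| |].
  - left. apply ln_increasing; lra.
  - rewrite Heq. right. reflexivity.
Qed.

Lemma cosh_dist_exp (r1 r2 D : R) :
  cosh r1 * cosh r2 - sinh r1 * sinh r2 * cos D
  = (exp r1 / exp r2 + exp r2 / exp r1) / 2
    + sin (D / 2) * sin (D / 2) * ((exp r1 - / exp r1) * (exp r2 - / exp r2)) / 2.
Proof.
  assert (HcD : cos D = 1 - 2 * sin (D / 2) * sin (D / 2)).
  { rewrite <- cos_2a_sin. f_equal. field. }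
  pose proof (exp_pos r1). pose proof (exp_pos r2).
  unfold cosh, sinh. rewrite HcD, !exp_Ropp. field. lra.
Qed.

Lemma hdist_le (Rad r1 r2 t1 t2 : R) :
  0 <= r1 -> 0 <= r2 ->
  Rabs (r1 - r2) <= Rad - 2 * ln 2 ->
  (t1 - t2) * (t1 - t2) * exp (r1 + r2) <= 2 * exp Rad ->
  hdist (r1, t1) (r2, t2) <= Rad.
Proof.
  intros Hr1 Hr2 Hrad Hang. unfold hdist; simpl.
  rewrite cosh_dist_exp.
  set (X := exp r1). set (Y := exp r2). set (s := sin ((t1 - t2) / 2)).
  assert (HX : 1 <= X) by (pose proof (exp_ineq1_le r1); unfold X; lra).
  assert (HY : 1 <= Y) by (pose proof (exp_ineq1_le r2); unfold Y; lra).
  assert (HXi : 0 < / X <= 1) by (split; [apply Rinv_0_lt_compat; lra|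
                                          rewrite <- Rinv_1; apply Rinv_le_contravar; lra]).
  assert (HYi : 0 < / Y <= 1) by (split; [apply Rinv_0_lt_compat; lra|
                                          rewrite <- Rinv_1; apply Rinv_le_contravar; lra]).
  assert (HXY : X * Y = exp (r1 + r2)) by (unfold X, Y; rewrite exp_plus; reflexivity).
  assert (Hprod0 : 0 <= (X - / X) * (Y - / Y)) by nra.
  assert (Hprod1 : (X - / X) * (Y - / Y) <= X * Y) by nra.
  assert (Hs : s * s <= (t1 - t2) / 2 * ((t1 - t2) / 2)) by apply sin_sq_le.
  assert (Hss : 0 <= s * s) by nra.
  (* radial part: [X/Y] and [Y/X] are both at most [e^|r1 - r2| <= e^Rad / 4] *)
  assert (Hquot : forall a b, Rabs (a - b) <= Rad - 2 * ln 2 -> exp a / exp b <= exp Rad / 4).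
  { intros a b Hab. unfold Rdiv at 1. rewrite <- exp_Ropp, <- exp_plus, <- exp_minus_2ln2.
    apply exp_le_mono. pose proof (Rle_abs (a - b)). lra. }
  assert (HXY1 : X / Y <= exp Rad / 4) by (apply Hquot; exact Hrad).
  assert (HXY2 : Y / X <= exp Rad / 4) by (apply Hquot; rewrite Rabs_minus_sym; exact Hrad).
  assert (HXYge : 2 <= X / Y + Y / X).
  { assert (X / Y + Y / X - 2 = (X - Y) * (X - Y) / (X * Y)) by (field; lra).
    assert (0 <= (X - Y) * (X - Y) / (X * Y)).
    { unfold Rdiv. apply Rmult_le_pos; [apply Rle_0_sqr|]. apply Rlt_le, Rinv_0_lt_compat; nra. }
    lra. }
  (* angular part: [s^2 (X - 1/X)(Y - 1/Y) <= (D/2)^2 e^(r1+r2) <= e^Rad / 2] *)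
  assert (Hangle : s * s * ((X - / X) * (Y - / Y)) <= exp Rad / 2).
  { apply Rle_trans with ((t1 - t2) / 2 * ((t1 - t2) / 2) * (X * Y)).
    - apply Rmult_le_compat; lra.
    - rewrite HXY. lra. }
  apply arcosh_le; nra.
Qed.

Lemma leb_true (a b : R) : Defs.leb a b = true -> a <= b.
Proof. unfold Defs.leb; destruct (Rle_dec a b); congruence. Qed.

Lemma ltb_true (a b : R) : Defs.ltb a b = true -> a < b.
Proof. unfold Defs.ltb; destruct (Rlt_dec a b); congruence. Qed.

Lemma tile_spec (Rad : R) (i j : nat) (p : pt) : inTileb Rad i j p = true ->
  0 <= fst p /\ fst p < Rad /\ Rad - 2 * (INR i + 1) * ln 2 <= fst p /\
  fst p < Rad - 2 * INR i * ln 2 /\ inSector Rad i j p.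
Proof.
  unfold inTileb, inSector. intro H.
  repeat match goal with H : andb _ _ = true |- _ => apply Bool.andb_true_iff in H; destruct H end.
  repeat match goal with
         | H : Defs.leb _ _ = true |- _ => apply leb_true in H
         | H : Defs.ltb _ _ = true |- _ => apply ltb_true in H end.
  repeat split; assumption.
Qed.

Lemma ntiles_pos (Rad : R) (i : nat) : 0 < ntiles Rad i.
Proof. unfold ntiles. apply powerRZ_lt. lra. Qed.

Lemma ntiles_ge (Rad : R) (i : nat) : 8 * exp (Rad / 2 - INR i * ln 2) <= ntiles Rad i.
Proof.
  pose proof ln2_bounds.
  unfold ntiles. rewrite powerRZ_Rpower by lra. unfold Rpower.
  rewrite !plus_IZR, minus_IZR, <- INR_IZR_INZ.
  unfold floorZ. pose proof (base_Int_part (Rad / (2 * ln 2))) as [_ HF].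
  set (F := IZR (Int_part (Rad / (2 * ln 2)))) in *.
  assert (HF2 : F * ln 2 > Rad / 2 - ln 2).
  { assert ((Rad / (2 * ln 2)) * ln 2 = Rad / 2) by (field; lra).
    assert (F * ln 2 > (Rad / (2 * ln 2) - 1) * ln 2) by (apply Rmult_gt_compat_r; lra).
    lra. }
  replace 8 with (exp (ln 2 + ln 2 + ln 2)) by (rewrite !exp_plus, exp_ln by lra; ring).
  rewrite <- exp_plus. apply exp_le_mono. lra.
Qed.

Lemma imax_bound (Rad : R) (i j : nat) :
  admissible Rad i j -> 2 * INR i * ln 2 < 9 / 10 * Rad + 2 * ln 2.
Proof.
  intros [H _]. unfold imax, ceilZ in H. apply IZR_le in H.
  rewrite <- INR_IZR_INZ, opp_IZR in H.
  pose proof (base_Int_part (- (9 / 10 * Rad / (2 * ln 2)))) as [_ HF].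
  pose proof ln2_bounds.
  assert (Hi : INR i < 9 / 10 * Rad / (2 * ln 2) + 1) by lra.
  assert (9 / 10 * Rad / (2 * ln 2) * (2 * ln 2) = 9 / 10 * Rad) by (field; lra).
  assert (INR i * (2 * ln 2) < (9 / 10 * Rad / (2 * ln 2) + 1) * (2 * ln 2))
    by (apply Rmult_lt_compat_r; lra).
  lra.
Qed.

Lemma tile_disj (Rad : R) (i j i' j' : nat) (p : pt) : (i' <= i)%nat -> (i', j') <> (i, j) ->
  inTileb Rad i' j' p = true -> inTileb Rad i j p = true -> False.
Proof.
  intros Hle Hne H1 H2.
  destruct (tile_spec _ _ _ _ H1) as (_ & _ & A1 & A2 & A3).
  destruct (tile_spec _ _ _ _ H2) as (_ & _ & B1 & B2 & B3).
  pose proof ln2_bounds.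
  destruct (Nat.eq_dec i' i) as [->|Hii].
  - (* same ring: the angular intervals of distinct tiles are disjoint *)
    unfold inSector in A3, B3. pose proof (ntiles_pos Rad i) as Hn.
    set (n := ntiles Rad i) in *. set (c := 2 * PI / n).
    assert (Hc : 0 < c) by (unfold c; pose proof PI_RGT_0; apply Rdiv_lt_0_compat; lra).
    assert (E : forall k, 2 * PI * k / n = c * k) by (intros; unfold c; field; lra).
    rewrite !E in A3, B3.
    assert (Hj1 : INR j' < INR (S j)) by (rewrite S_INR; apply (Rmult_lt_reg_l c); lra).
    assert (Hj2 : INR j < INR (S j')) by (rewrite S_INR; apply (Rmult_lt_reg_l c); lra).
    apply INR_lt in Hj1. apply INR_lt in Hj2.
    apply Hne. f_equal. lia.
  - (* lower ring: the radial intervals are disjoint *)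
    assert (Hlt : INR (S i') <= INR i) by (apply le_INR; lia).
    rewrite S_INR in Hlt. nra.
Qed.

(* The region formed by the tiles below [T_{i,j}]: the part of the sector of [T_{i,j}]
   above the inner radius of [T_{i,j}]. *)
Definition below_region (Rad : R) (i j : nat) (q : pt) : Prop :=
  0 <= fst q < Rad /\ Rad - 2 * (INR i + 1) * ln 2 <= fst q /\ inSector Rad i j q.

Lemma below_refl (Rad : R) (i j : nat) : below Rad i j i j.
Proof.
  split; [lia|]. intros p Hp. apply (tile_spec _ _ _ _ Hp).
Qed.

Lemma below_in_region (Rad : R) (i j i' j' : nat) (q : pt) :
  below Rad i' j' i j -> inTileb Rad i' j' q = true -> below_region Rad i j q.
Proof.
  intros [Hle Hsec] Hq.
  destruct (tile_spec _ _ _ _ Hq) as (A0 & A1 & A2 & _).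
  apply le_INR in Hle. pose proof ln2_bounds.
  split; [lra|split; [nra|apply Hsec, Hq]].
Qed.

Lemma angular_bound (D w G E Rad : R) :
  0 < G -> Rabs D <= w -> w * (4 * G) <= PI -> 0 <= E -> E <= G * G * exp Rad ->
  D * D * E <= 2 * exp Rad.
Proof.
  intros HG HD Hw HE0 HE. pose proof PI_4. pose proof (Rabs_pos D). pose proof (exp_pos Rad).
  assert (HDG : 0 <= Rabs D * G <= 1) by (split; nra).
  assert (HD2 : D * D = Rabs D * Rabs D)
    by (rewrite <- Rabs_mult; symmetry; apply Rabs_right; apply Rle_ge, Rle_0_sqr).
  rewrite HD2.
  apply Rle_trans with (Rabs D * Rabs D * (G * G * exp Rad)); [apply Rmult_le_compat_l; nra|].
  replace (Rabs D * Rabs D * (G * G * exp Rad)) with ((Rabs D * G) * (Rabs D * G) * exp Rad)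
    by ring.
  assert ((Rabs D * G) * (Rabs D * G) <= 1) by nra.
  nra.
Qed.

Lemma tile_hub (Rad : R) (i j : nat) (p q : pt) : 1000 <= Rad -> admissible Rad i j ->
  inTileb Rad i j p = true -> below_region Rad i j q -> hdist p q <= Rad /\ hdist q p <= Rad.
Proof.
  intros HR Hadm Hp (Hq0 & Hq1 & Hq2).
  destruct (tile_spec _ _ _ _ Hp) as (Hp0 & Hp1 & Hp2 & Hp3 & Hp4).
  pose proof ln2_bounds. pose proof (imax_bound _ _ _ Hadm).
  pose proof (ntiles_pos Rad i) as Hn. pose proof (ntiles_ge Rad i) as Hn8.
  pose proof PI_RGT_0.
  set (n := ntiles Rad i) in *.
  unfold inSector in Hp4, Hq2. fold n in Hp4, Hq2.
  assert (Hw : 2 * PI * (INR j + 1) / n - 2 * PI * INR j / n = 2 * PI / n) by (field; lra).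
  assert (Hrad : Rabs (fst p - fst q) <= Rad - 2 * ln 2) by (apply Rabs_le; split; nra).
  set (G := exp (Rad / 2 - INR i * ln 2)) in *.
  assert (HG : 0 < G) by apply exp_pos.
  (* the angular width [2 pi / n] is at most [pi / (4 G)], and [e^(r_p + r_q) <= G^2 e^Rad] *)
  assert (Hwidth : 2 * PI / n * (4 * G) <= PI).
  { apply Rle_trans with (2 * PI / n * (n / 2)); [|right; field; lra].
    apply Rmult_le_compat_l; [apply Rlt_le, Rdiv_lt_0_compat; lra|lra]. }
  assert (Hexp : exp (fst p + fst q) <= G * G * exp Rad).
  { unfold G. rewrite <- !exp_plus. apply exp_le_mono. lra. }
  assert (Hang : forall D, Rabs D <= 2 * PI / n -> D * D * exp (fst p + fst q) <= 2 * exp Rad)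
    by (intros D HD; apply (angular_bound D (2 * PI / n) G); auto; apply Rlt_le, exp_pos).
  destruct p as [rp tp], q as [rq tq]; simpl in *.
  split; apply hdist_le; try lra.
  - apply Hang, Rabs_le; split; lra.
  - rewrite Rabs_minus_sym; exact Hrad.
  - rewrite Rplus_comm. apply Hang, Rabs_le; split; lra.
Qed.

Theorem mainTheorem8 :
  exists R0 : R, forall Rad : R, R0 <= Rad ->
  forall (V : list pt),
    NoDup V ->
    (forall p, In p V -> inDisk Rad p) ->
    (* the origin is represented at most once *)
    (forall p q, In p V -> In q V -> fst p = 0 -> fst q = 0 -> p = q) ->
  forall (i j : nat), admissible Rad i j ->
  let inS := fun p => In p V /\
      exists i' j', admissible Rad i' j' /\ (i', j') <> (i, j) /\
                    below Rad i' j' i j /\ inTileb Rad i' j' p = true in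
  let inT := fun p => In p V /\ inTileb Rad i j p = true in
  let y := length (filter (inTileb Rad i j) V) in
  forall x : nat,
    (3 <= y)%nat ->
    covered_by (adjG Rad) inS x ->
    covered_by (adjG Rad) (fun p => inS p \/ inT p) (Nat.max 1 (x + 1 - y)) /\
    ((y > x)%nat ->
     exists c : list pt,
       is_cycle (adjG Rad) c /\
       (forall p, In p c <-> (inS p \/ inT p)) /\
       length (filter (fun e => andb (inTileb Rad i j (fst e)) (inTileb Rad i j (snd e)))
                      (cyc_edges c)) = (y - x)%nat).
Proof.
  exists 1000. intros Rad HR V HVnd _ _ i j Hadm inS inT y x Hy Hcov.
  set (f := inTileb Rad i j).
  (* [S] lies in tiles below [T_{i,j}] other than [T_{i,j}], hence outside [T_{i,j}] *)
  assert (HSf : forall v, inS v -> f v = false).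
  { intros v (_ & i' & j' & _ & Hne & [Hle _] & Hv).
    destruct (f v) eqn:Hfv; [|reflexivity].
    exfalso. exact (tile_disj Rad i j i' j' v Hle Hne Hv Hfv). }
  assert (HW : forall v, inS v \/ inT v <-> inS v \/ In v (filter f V)).
  { intros v. unfold inT. rewrite filter_In. reflexivity. }
  assert (Hregion : forall v, inS v \/ inT v -> below_region Rad i j v).
  { intros v [(_ & i' & j' & _ & _ & Hb & Hv)|(_ & Hv)].
    - exact (below_in_region _ _ _ _ _ _ Hb Hv).
    - exact (below_in_region _ _ _ _ _ _ (below_refl Rad i j) Hv). }
  assert (Hhub : forall t v, f t = true -> inS v \/ inT v -> t <> v ->
                             adjG Rad t v /\ adjG Rad v t).
  { intros t v Ht Hv Hne.
    destruct (tile_hub Rad i j t v HR Hadm Ht (Hregion v Hv)) as [Htv Hvt].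
    split; split; auto. }
  exact (absorb_hub _ (adjG Rad) f _ Hhub inS (filter f V) x (NoDup_filter _ HVnd) Hy
           (fun t Ht => proj2 (proj1 (filter_In _ _ _) Ht)) HSf HW Hcov).
Qed.
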